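(* Let $h=(h_1,\dots,h_n):\mathbb C\to\mathbb R^n$ be a branched minimal immersion, write $\frac{\partial h_i}{\partial z}(z)=\sum_{j=0}^\infty c^i_jz^j$ and $c_j=(c^1_j,\dots,c^n_j)\in\mathbb C^n$. Then $h$ is holomorphic up to a rigid motion if and only if $g(c_m,c_k)=0$ for all integers $m,k\geq0$, where $g(u,v)=\sum_{i=1}^n u_iv_i$ is the standard complex bilinear form on $\mathbb C^n$.
   Context: A branched minimal immersion is a nonconstant smooth map that is harmonic and conformal. $h$ is holomorphic up to a rigid motion if its image lies in an even-dimensional affine subspace $b+W\subset\mathbb R^n$ and there is a linear $J:W\to W$ with $J^2=-I$ preserving the Euclidean inner product such that $dh\circ j=J\circ dh$, $j$ the standard complex structure on $\mathbb C$ (equivalently $Jh_x=h_y$, $Jh_y=-h_x$). *)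

From Stdlib Require Import Reals Arith Lia List.
From Coquelicot Require Import Coquelicot.
Open Scope R_scope.

Definition idx (n : nat) : Type := { i : nat | (i < n)%nat }.
Definition vec (n : nat) : Type := idx n -> R.

Fixpoint rsum (m : nat) (f : nat -> R) : R :=
  match m with O => 0 | S k => rsum k f + f k end.
Fixpoint csum (m : nat) (f : nat -> C) : C :=
  match m with O => RtoC 0 | S k => Cplus (csum k f) (f k) end.

Definition fsumR (n : nat) (f : idx n -> R) : R :=
  rsum n (fun i => match lt_dec i n with
                   | left H => f (exist _ i H) | right _ => 0 end).
Definition fsumC (n : nat) (f : idx n -> C) : C :=
  csum n (fun i => match lt_dec i n with
                   | left H => f (exist _ i H) | right _ => RtoC 0 end).

Definition dotR (n : nat) (u v : vec n) : R := fsumR n (fun i => u i * v i).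
Definition gC (n : nat) (u v : idx n -> C) : C := fsumC n (fun i => Cmult (u i) (v i)).

Definition pdx (f : R -> R -> R) : R -> R -> R := fun x y => Derive (fun t => f t y) x.
Definition pdy (f : R -> R -> R) : R -> R -> R := fun x y => Derive (fun t => f x t) y.

Fixpoint iterD (w : list bool) (f : R -> R -> R) : R -> R -> R :=
  match w with
  | nil => f
  | cons b w' => (if b then pdx else pdy) (iterD w' f)
  end.

Definition smooth2 (f : R -> R -> R) : Prop :=
  forall (w : list bool) (x y : R),
    ex_derive (fun t => iterD w f t y) x /\
    ex_derive (fun t => iterD w f x t) y /\
    continuity_2d_pt (iterD w f) x y.

(* branched minimal immersion h : C -> R^n, h i x y = h_i(x + i y) *)
Definition branched_minimal_immersion (n : nat) (h : idx n -> R -> R -> R) : Prop :=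
  (exists x1 y1 x2 y2, (fun i => h i x1 y1) <> (fun i => h i x2 y2)) /\
  (forall i, smooth2 (h i)) /\
  (forall i x y, pdx (pdx (h i)) x y + pdy (pdy (h i)) x y = 0) /\
  (forall x y,
      dotR n (fun i => pdx (h i) x y) (fun i => pdy (h i) x y) = 0 /\
      dotR n (fun i => pdx (h i) x y) (fun i => pdx (h i) x y) =
      dotR n (fun i => pdy (h i) x y) (fun i => pdy (h i) x y)).

Definition dz (f : R -> R -> R) (x y : R) : C :=
  (pdx f x y / 2, - (pdy f x y) / 2).

Definition lincomb (n m : nat) (a : nat -> R) (e : nat -> vec n) : vec n :=
  fun i => rsum m (fun j => a j * e j i).

Definition in_span (n m : nat) (e : nat -> vec n) (v : vec n) : Prop :=
  exists a : nat -> R, v = lincomb n m a e.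
Definition lin_indep (n m : nat) (e : nat -> vec n) : Prop :=
  forall a : nat -> R, lincomb n m a e = (fun _ => 0) ->
    forall j, (j < m)%nat -> a j = 0.

Definition holomorphic_up_to_rigid_motion (n : nat) (h : idx n -> R -> R -> R) : Prop :=
  exists (b : vec n) (k : nat) (e : nat -> vec n) (J : vec n -> vec n),
    let W := in_span n (2 * k) e in
    lin_indep n (2 * k) e /\
    (forall x y, W (fun i => h i x y - b i)) /\
    (forall u, W u -> W (J u)) /\
    (forall u v a, W u -> W v ->
        J (fun i => a * u i + v i) = (fun i => a * J u i + J v i)) /\
    (forall u, W u -> J (J u) = (fun i => - u i)) /\
    (forall u v, W u -> W v -> dotR n (J u) (J v) = dotR n u v) /\
    (forall x y,
        J (fun i => pdx (h i) x y) = (fun i => pdy (h i) x y) /\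
        J (fun i => pdy (h i) x y) = (fun i => - pdx (h i) x y)).

(* Write c_j = a_j + i b_j, so that h_z = (h_x - i h_y)/2 = sum_j c_j z^j.
   If J is an orthogonal complex structure on W with J h_x = h_y, then
   g(h_z(z), h_z(w)) = 0 for all z, w, and comparing power-series coefficients
   along the real axis, first in z and then in w, gives g(c_m, c_k) = 0.
   Conversely, g(c_m, c_k) = 0 says exactly that a_j |-> -b_j, b_j |-> a_j preserves
   all inner products within the family, so it extends to a well-defined linear
   isometry J of W = span{a_j, b_j} with J^2 = -1 (hence dim W is even); summing the
   series gives J h_x = h_y, and h - h(0) lies in W because its partials do.
   Of the minimal-immersion hypotheses only smoothness is used: harmonicity is
   encoded in the power-series expansion of h_z, and conformality follows from
   either side of the equivalence. *)

From Stdlib Require Import Reals.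
From Coquelicot Require Import Coquelicot.
From Stdlib Require Import Classical FunctionalExtensionality.
From mathcomp Require Import all_boot all_algebra.
From mathcomp Require Import Rstruct.
From mathcomp Require Import ring lra.
Import GRing.Theory Num.Theory.
Open Scope R_scope.

Set Implicit Arguments. Unset Strict Implicit. Unset Printing Implicit Defensive.

Section ComplexStructure.
Local Open Scope ring_scope.

Definition dotmx (F : pzRingType) n (u v : 'rV[F]_n) : F := (u *m v^T) 0 0.

Lemma dotmxC (F : comPzRingType) n (u v : 'rV[F]_n) : dotmx u v = dotmx v u.
Proof. by rewrite /dotmx !mxE; apply: eq_bigr => k _; rewrite !mxE mulrC. Qed.

Lemma dotmxZl (F : comPzRingType) n a (u v : 'rV[F]_n) : dotmx (a *: u) v = a * dotmx u v.
Proof. by rewrite /dotmx -scalemxAl mxE. Qed.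

Lemma dotmxZr (F : comPzRingType) n a (u v : 'rV[F]_n) : dotmx u (a *: v) = a * dotmx u v.
Proof. by rewrite dotmxC dotmxZl dotmxC. Qed.

Lemma dotmxNl (F : comPzRingType) n (u v : 'rV[F]_n) : dotmx (- u) v = - dotmx u v.
Proof. by rewrite -scaleN1r dotmxZl mulN1r. Qed.

Lemma mulmx_tr_eq0 (F : realFieldType) n (v : 'rV[F]_n) : v *m v^T = 0 -> v = 0.
Proof.
move=> /matrixP /(_ 0 0); rewrite !mxE => /eqP.
rewrite psumr_eq0 => [/allP vv0|i _]; last by rewrite mxE -expr2 sqr_ge0.
apply/matrixP => i k; rewrite [i]ord1 mxE.
by have := vv0 k (mem_index_enum _); rewrite mxE mulf_eq0 orbb => /eqP.
Qed.

(** Real and imaginary parts of [g(u + i v, p + i q)]. *)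
Definition cdot_re (F : pzRingType) n (u v p q : 'rV[F]_n) : F := dotmx u p - dotmx v q.
Definition cdot_im (F : pzRingType) n (u v p q : 'rV[F]_n) : F := dotmx u q + dotmx v p.
Definition cortho (F : pzRingType) n (u v p q : 'rV[F]_n) :=
  cdot_re u v p q = 0 /\ cdot_im u v p q = 0.

Lemma cortho_sym (F : comPzRingType) n (u v p q : 'rV[F]_n) :
  cortho u v p q -> cortho p q u v.
Proof. by rewrite /cortho /cdot_re /cdot_im !(dotmxC p) !(dotmxC q) [dotmx v p + _]addrC. Qed.

Definition isotropic (F : pzRingType) n (a b : nat -> 'rV[F]_n) :=
  forall m k, dotmx (a m) (a k) = dotmx (b m) (b k) /\
              dotmx (a m) (b k) = - dotmx (b m) (a k).

Lemma isotropicP (F : pzRingType) n (a b : nat -> 'rV[F]_n) :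
  isotropic a b <-> forall m k, cortho (a m) (b m) (a k) (b k).
Proof.
rewrite /isotropic /cortho /cdot_re /cdot_im.
split=> iso_ab m k; have [E1 E2] := iso_ab m k; first by rewrite E1 E2 subrr addNr.
by split; apply/eqP; [rewrite -subr_eq0 E1 | rewrite -addr_eq0 E2].
Qed.

Definition family_mx (F : pzRingType) n (a : nat -> 'rV[F]_n) N : 'M[F]_(N, n) :=
  \matrix_(j < N) a j.
Definition pair_mx (F : pzRingType) n (a b : nat -> 'rV[F]_n) N : 'M[F]_(N + N, n) :=
  col_mx (family_mx a N) (family_mx b N).
Definition rot_mx (F : pzRingType) n (a b : nat -> 'rV[F]_n) N : 'M[F]_(N + N, n) :=
  col_mx (- family_mx b N) (family_mx a N).
Definition cplx_mx (F : pzRingType) N : 'M[F]_(N + N) := block_mx 0 (- 1%:M) 1%:M 0.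

Lemma rot_mxE (F : pzRingType) n a b N :
  @rot_mx F n a b N = cplx_mx F N *m pair_mx a b N.
Proof.
by rewrite /rot_mx /cplx_mx /pair_mx mul_block_col !mul0mx !mul1mx add0r addr0 mulNmx mul1mx.
Qed.

Lemma cplx_mxK (F : pzRingType) N : cplx_mx F N *m cplx_mx F N = - 1%:M.
Proof.
rewrite /cplx_mx mulmx_block !mul0mx !mulmx0 !add0r !addr0 !mulmxN !mul1mx.
by rewrite mulNmx mulmx1 (@scalar_mx_block _ N N 1) opp_block_mx oppr0.
Qed.

Lemma family_mx_gram (F : comPzRingType) n (a b : nat -> 'rV[F]_n) N :
  family_mx a N *m (family_mx b N)^T = \matrix_(i < N, j < N) dotmx (a i) (b j).
Proof.
apply/matrixP => i j; rewrite !mxE /dotmx !mxE.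
by apply: eq_bigr => k _; rewrite !mxE.
Qed.

Lemma cplx_mx_gram (F : comPzRingType) n (a b : nat -> 'rV[F]_n) N : isotropic a b ->
  cplx_mx F N *m (pair_mx a b N *m (pair_mx a b N)^T) *m (cplx_mx F N)^T =
  pair_mx a b N *m (pair_mx a b N)^T.
Proof.
move=> iso_ab.
have Eaa : family_mx a N *m (family_mx a N)^T = family_mx b N *m (family_mx b N)^T.
  by rewrite !family_mx_gram; apply/matrixP => i j; rewrite !mxE (iso_ab i j).1.
have Eab : family_mx a N *m (family_mx b N)^T = - (family_mx b N *m (family_mx a N)^T).
  by rewrite !family_mx_gram; apply/matrixP => i j; rewrite !mxE (iso_ab i j).2.
rewrite /pair_mx /cplx_mx tr_col_mx mul_col_row tr_block_mx !trmx0 raddfN /= tr_scalar_mx.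
rewrite mulmx_block !mul0mx !add0r !addr0 !mulNmx !mul1mx.
rewrite mulmx_block !mulmx0 !add0r !addr0 !mulmxN !mulmx1 !opprK.
by rewrite Eab opprK -Eaa.
Qed.

(** Every linear relation among the [a j, b j] is also one among the [- b j, a j],
    because the rotation preserves the Gram matrix. *)
Lemma rot_mx_ker (F : realFieldType) n (a b : nat -> 'rV[F]_n) N (D : 'rV[F]_(N + N)) :
  isotropic a b -> D *m pair_mx a b N = 0 -> D *m rot_mx a b N = 0.
Proof.
move=> iso_ab DM0; apply: mulmx_tr_eq0.
have -> : D *m rot_mx a b N *m (D *m rot_mx a b N)^T =
   D *m (cplx_mx F N *m (pair_mx a b N *m (pair_mx a b N)^T) *m (cplx_mx F N)^T) *m D^T.
  by rewrite rot_mxE !trmx_mul !mulmxA.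
by rewrite (cplx_mx_gram _ iso_ab) !mulmxA DM0 !mul0mx.
Qed.

Lemma pair_mx_solve (F : realFieldType) n (a b : nat -> 'rV[F]_n) N :
  isotropic a b -> pair_mx a b N *m (pinvmx (pair_mx a b N) *m rot_mx a b N) = rot_mx a b N.
Proof.
move=> iso_ab; set M := pair_mx a b N; set P := M *m pinvmx M.
have PM : (P - 1%:M) *m M = 0 by rewrite mulmxBl mul1mx /P mulmxKpV ?submx_refl // subrr.
have PT : (P - 1%:M) *m rot_mx a b N = 0.
  apply/row_matrixP => i; rewrite row_mul row0; apply: rot_mx_ker => //.
  by rewrite -row_mul PM row0.
by apply/eqP; rewrite -subr_eq0; move: PT; rewrite mulmxBl mul1mx mulmxA => /eqP.
Qed.

Lemma pair_mx_mulP (F : pzRingType) n (a b : nat -> 'rV[F]_n) N Y :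
  pair_mx a b N *m Y = rot_mx a b N <->
  forall l, (l < N)%N -> a l *m Y = - b l /\ b l *m Y = a l.
Proof.
rewrite /pair_mx /rot_mx mul_col_mx; split=> [/eq_col_mx[Ea Eb] l lN | Eab].
  have := congr1 (row (Ordinal lN)) Ea; have := congr1 (row (Ordinal lN)) Eb.
  by rewrite !row_mul linearN /= !rowK => -> ->.
congr col_mx; apply/row_matrixP => j.
  by rewrite row_mul linearN /= !rowK (Eab j (ltn_ord j)).1.
by rewrite row_mul !rowK (Eab j (ltn_ord j)).2.
Qed.

Lemma family_sub_pair_mx (F : fieldType) n (a b : nat -> 'rV[F]_n) N j :
  (j < N)%N -> (a j <= pair_mx a b N)%MS /\ (b j <= pair_mx a b N)%MS.
Proof.
move=> jN; have -> : a j = row (lshift N (Ordinal jN)) (pair_mx a b N) by rewrite rowKu rowK.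
have -> : b j = row (rshift N (Ordinal jN)) (pair_mx a b N) by rewrite rowKd rowK.
by rewrite !row_sub.
Qed.

Lemma pair_mx_mono (F : fieldType) n (a b : nat -> 'rV[F]_n) N N' :
  (N <= N')%N -> (pair_mx a b N <= pair_mx a b N')%MS.
Proof.
move=> NN'; rewrite col_mx_sub; apply/andP; split; apply/row_subP => j; rewrite rowK;
  have jN' := leq_trans (ltn_ord j) NN'.
  exact: (family_sub_pair_mx a b jN').1.
exact: (family_sub_pair_mx a b jN').2.
Qed.

Lemma pair_mx_rank_max (F : fieldType) n (a b : nat -> 'rV[F]_n) :
  exists N0, forall N, (\rank (pair_mx a b N) <= \rank (pair_mx a b N0))%N.
Proof.
apply: NNPP => no_max.
have rank_ge k : exists N, (k <= \rank (pair_mx a b N))%N.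
  elim: k => [|k [N kN]]; first by exists 0%N.
  have [N' /negP] : exists N', ~ (\rank (pair_mx a b N') <= \rank (pair_mx a b N))%N.
    by apply: not_all_ex_not => bounded; apply: no_max; exists N.
  by rewrite -ltnNge => ltN'; exists N'; apply: leq_ltn_trans ltN'.
have [N ltnN] := rank_ge n.+1.
by have := rank_leq_col (pair_mx a b N); rewrite leqNgt (leq_trans _ ltnN).
Qed.

Lemma pair_mx_rank_max_sub (F : fieldType) n (a b : nat -> 'rV[F]_n) N0 :
  (forall N, (\rank (pair_mx a b N) <= \rank (pair_mx a b N0))%N) ->
  forall j, (a j <= pair_mx a b N0)%MS /\ (b j <= pair_mx a b N0)%MS.
Proof.
move=> maxN0 j; set N := maxn N0 j.+1.
have sub0 : (pair_mx a b N0 <= pair_mx a b N)%MS by apply: pair_mx_mono; rewrite leq_maxl.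
have sub1 : (pair_mx a b N <= pair_mx a b N0)%MS.
  by rewrite -(mxrank_leqif_sup sub0) eqn_leq maxN0 mxrankS.
have [aj bj] := family_sub_pair_mx a b (leq_maxr N0 j.+1 : (j < N)%N).
by split; apply: submx_trans sub1.
Qed.

Lemma row_free_cplx_even (F : realFieldType) m n (E : 'M[F]_(m, n)) (X : 'M[F]_n) :
  row_free E -> (E *m X <= E)%MS -> E *m X *m X = - E -> ~~ odd m.
Proof.
move=> freeE EX EXX; set K := E *m X *m pinvmx E.
have KE : K *m E = E *m X by rewrite /K mulmxKpV.
have KK : K *m K = - 1%:M.
  by apply: (row_free_inj freeE); rewrite /= -mulmxA KE mulmxA KE EXX mulNmx mul1mx.
apply/negP => odd_m; have := congr1 determinant KK.
rewrite det_mulmx -scaleN1r detZ det1 mulr1 -signr_odd odd_m expr1 => detKK.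
by have := sqr_ge0 (\det K); rewrite expr2 detKK ler0N1.
Qed.

Lemma mulmx_gram (F : comPzRingType) p q r m (A : 'M[F]_(p, q)) (B : 'M[F]_(q, m))
    (C : 'M[F]_(r, q)) :
  A *m B *m (C *m B)^T = A *m (B *m B^T) *m C^T.
Proof. by rewrite trmx_mul !mulmxA. Qed.

(** Once [N0] has maximal rank, [M := pair_mx a b N0] spans every [a j, b j], and
    [X] solving [M *m X = rot_mx a b N0] is the complex structure. *)
Section MaximalFamily.
Variables (F : realFieldType) (n : nat) (a b : nat -> 'rV[F]_n) (N0 : nat).
Hypothesis iso_ab : isotropic a b.
Hypothesis maxN0 : forall N, (\rank (pair_mx a b N) <= \rank (pair_mx a b N0))%N.

Let M := pair_mx a b N0.
Let X := pinvmx M *m rot_mx a b N0.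

Lemma cplx_act_pair : M *m X = cplx_mx F N0 *m M.
Proof. by rewrite pair_mx_solve // rot_mxE. Qed.

Lemma cplx_actE k (U : 'M_(k, n)) :
  (U <= M)%MS -> U *m X = U *m pinvmx M *m (cplx_mx F N0 *m M).
Proof. by move=> UM; rewrite -{1}(mulmxKpV UM) -mulmxA cplx_act_pair. Qed.

Lemma cplx_act_sub k (U : 'M_(k, n)) : (U <= M)%MS -> (U *m X <= M)%MS.
Proof. by move=> UM; rewrite cplx_actE // mulmxA submxMl. Qed.

Lemma cplx_actK k (U : 'M_(k, n)) : (U <= M)%MS -> U *m X *m X = - U.
Proof.
move=> UM; rewrite (cplx_actE UM) -(mulmxA _ _ X) -(mulmxA _ M X) cplx_act_pair.
by rewrite mulmxA cplx_mxK mulNmx mul1mx mulmxN (mulmxKpV UM).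
Qed.

Lemma cplx_act_gram k l (U : 'M_(k, n)) (V : 'M_(l, n)) : (U <= M)%MS -> (V <= M)%MS ->
  U *m X *m (V *m X)^T = U *m V^T.
Proof.
move=> UM VM; rewrite (cplx_actE UM) (cplx_actE VM) mulmx_gram.
have -> : cplx_mx F N0 *m M *m (cplx_mx F N0 *m M)^T = M *m M^T.
  by rewrite trmx_mul !mulmxA -(cplx_mx_gram _ iso_ab) !mulmxA.
by rewrite -mulmx_gram (mulmxKpV UM) (mulmxKpV VM).
Qed.

Lemma cplx_act_family j : a j *m X = - b j /\ b j *m X = a j.
Proof.
set N := maxn N0 j.+1; set X' := pinvmx (pair_mx a b N) *m rot_mx a b N.
have /pair_mx_mulP X'ab := pair_mx_solve N iso_ab.
have MX' : M *m X' = M *m X.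
  rewrite pair_mx_solve //; apply/pair_mx_mulP => l lN0.
  by apply: X'ab; apply: leq_trans lN0 (leq_maxl _ _).
have XX' u : (u <= M)%MS -> u *m X = u *m X'.
  by move=> uM; rewrite -(mulmxKpV uM) -!mulmxA MX'.
have [aM bM] := pair_mx_rank_max_sub maxN0 j.
by rewrite (XX' _ _ aM) (XX' _ _ bM); apply: X'ab; rewrite leq_maxr.
Qed.

End MaximalFamily.

Lemma isotropic_cplx_structure (F : realFieldType) n (a b : nat -> 'rV[F]_n) :
  isotropic a b ->
  exists (r : nat) (E : 'M[F]_(r, n)) (X : 'M[F]_n),
   [/\ row_free E, ~~ odd r,
    (forall j, (a j <= E)%MS /\ (b j <= E)%MS),
    (forall j, a j *m X = - b j /\ b j *m X = a j) &
    [/\ (forall u : 'rV_n, (u <= E)%MS -> (u *m X <= E)%MS),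
     (forall u : 'rV_n, (u <= E)%MS -> u *m X *m X = - u) &
     (forall u v : 'rV_n, (u <= E)%MS -> (v <= E)%MS ->
        dotmx (u *m X) (v *m X) = dotmx u v)]].
Proof.
move=> iso_ab; have [N0 maxN0] := pair_mx_rank_max a b.
set M := pair_mx a b N0; set X := pinvmx M *m rot_mx a b N0.
have EM : (row_base M :=: M)%MS := eq_row_base M.
exists (\rank M), (row_base M), X; split.
- exact: row_base_free.
- have baseM : (row_base M <= M)%MS by rewrite EM.
  apply: (row_free_cplx_even (X := X) (row_base_free M)); last exact: cplx_actK.
  by apply: submx_trans (cplx_act_sub iso_ab baseM) _; rewrite EM.
- by move=> j; rewrite !EM; apply: pair_mx_rank_max_sub.
- exact: cplx_act_family.
split=> [u | u | u v]; rewrite ?EM => uM.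
- exact: cplx_act_sub.
- exact: cplx_actK.
- by move=> vM; rewrite /dotmx cplx_act_gram.
Qed.

End ComplexStructure.

Definition idx_of_ord n (i : 'I_n) : idx n := exist _ (nat_of_ord i) (elimT ltP (ltn_ord i)).
Definition ord_of_idx n (i : idx n) : 'I_n := Ordinal (introT ltP (proj2_sig i)).
Definition row_of_vec n (v : vec n) : 'rV[R]_n := \row_j v (idx_of_ord j).
Definition vec_of_row n (r : 'rV[R]_n) : vec n := fun i => r 0%R (ord_of_idx i).

Lemma ord_of_idxK n : cancel (@ord_of_idx n) (@idx_of_ord n).
Proof. by case=> i lt_in; congr exist; apply: Peano_dec.le_unique. Qed.

Lemma idx_of_ordK n : cancel (@idx_of_ord n) (@ord_of_idx n).
Proof. by move=> i; apply: val_inj. Qed.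

Lemma row_of_vecK n : cancel (@row_of_vec n) (@vec_of_row n).
Proof. by move=> v; apply: functional_extensionality => i; rewrite /vec_of_row mxE ord_of_idxK. Qed.

Lemma vec_of_rowK n : cancel (@vec_of_row n) (@row_of_vec n).
Proof. by move=> r; apply/matrixP => i j; rewrite /vec_of_row mxE idx_of_ordK [i]ord1. Qed.

Lemma row_of_vec_inj n : injective (@row_of_vec n).
Proof. exact: can_inj (@row_of_vecK n). Qed.

Lemma row_of_vec_lin n a (u v : vec n) :
  row_of_vec (fun i => a * u i + v i) = (a *: row_of_vec u + row_of_vec v)%R.
Proof. by apply/matrixP => z l; rewrite !mxE. Qed.

Lemma row_of_vecN n (u : vec n) : row_of_vec (fun i => - u i) = (- row_of_vec u)%R.
Proof. by apply/matrixP => z l; rewrite !mxE. Qed.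

Lemma rsum_big m f : rsum m f = (\sum_(i < m) f i)%R.
Proof. by elim: m => [|m IHm] /=; rewrite ?big_ord0 // big_ord_recr IHm. Qed.

Lemma fsumR_big n f : fsumR n f = (\sum_(i < n) f (idx_of_ord i))%R.
Proof.
rewrite /fsumR rsum_big; apply: eq_bigr => i _.
case: Compare_dec.lt_dec => [lt_in | /(_ (elimT ltP (ltn_ord i)))] //.
by congr f; congr exist; apply: Peano_dec.le_unique.
Qed.

Lemma dotR_dotmx n u v : dotR n u v = dotmx (row_of_vec u) (row_of_vec v).
Proof. by rewrite /dotR fsumR_big /dotmx !mxE; apply: eq_bigr => i _; rewrite !mxE. Qed.

Definition span_mx n m (e : nat -> vec n) : 'M[R]_(m, n) := \matrix_(j < m) row_of_vec (e j).

Lemma row_of_vec_lincomb n m a e :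
  row_of_vec (lincomb n m a e) = ((\row_(j < m) a j) *m span_mx m e)%R.
Proof.
apply/matrixP => i l; rewrite /lincomb !mxE rsum_big.
by apply: eq_bigr => j _; rewrite !mxE.
Qed.

Lemma in_spanP n m e v : in_span n m e v <-> (row_of_vec v <= span_mx m e)%MS.
Proof.
split=> [[a ->] | /submxP[D vD]]; first by rewrite row_of_vec_lincomb submxMl.
exists (fun j => if insub j is Some j' then D 0%R j' else 0).
apply: row_of_vec_inj; rewrite row_of_vec_lincomb vD; congr (_ *m _)%R.
by apply/matrixP => i j; rewrite !mxE [i]ord1 valK.
Qed.

Lemma lin_indep_row_free n m e : row_free (span_mx m e) -> lin_indep n m e.
Proof.
move=> free_e a a0 j lt_jm.
have : ((\row_(j < m) a j) *m span_mx m e = 0 *m span_mx m e)%R.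
  by rewrite mul0mx -row_of_vec_lincomb a0; apply/matrixP => x y; rewrite !mxE.
move=> /(row_free_inj free_e) /matrixP /(_ 0%R (Ordinal (introT ltP lt_jm))).
by rewrite !mxE.
Qed.

Lemma exists_span_mx n r (E : 'M[R]_(r, n)) : exists e, span_mx r e = E.
Proof.
exists (fun j => vec_of_row (if insub j is Some i then row i E else 0%R)).
by apply/row_matrixP => i; rewrite rowK vec_of_rowK valK.
Qed.

Lemma is_series_fst (u : nat -> C) (l : C) :
  @is_series C_AbsRing C_NormedModule u l -> is_series (fun j => fst (u j)) (fst l).
Proof.
rewrite /is_series => ul; apply: (filterlim_ext (fun N => fst (@sum_n C_AbelianMonoid u N))).
  by elim=> [|N IHN]; rewrite ?sum_O // !sum_Sn -IHN.
by apply: filterlim_comp ul _; case: l => l1 l2; apply: continuous_fst.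
Qed.

Lemma is_series_snd (u : nat -> C) (l : C) :
  @is_series C_AbsRing C_NormedModule u l -> is_series (fun j => snd (u j)) (snd l).
Proof.
rewrite /is_series => ul; apply: (filterlim_ext (fun N => snd (@sum_n C_AbelianMonoid u N))).
  by elim=> [|N IHN]; rewrite ?sum_O // !sum_Sn -IHN.
by apply: filterlim_comp ul _; case: l => l1 l2; apply: continuous_snd.
Qed.

Lemma is_series_0 : is_series (fun _ : nat => 0) 0.
Proof.
apply: (filterlim_ext (fun _ => zero)); last exact: filterlim_const.
by move=> N; rewrite /sum_n sum_n_m_const_zero.
Qed.

Lemma is_series_big (I : Type) (r : seq I) (u : I -> nat -> R) (l : I -> R) :
  (forall i, is_series (u i) (l i)) ->
  is_series (fun j => \sum_(i <- r) u i j)%R (\sum_(i <- r) l i)%R.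
Proof.
move=> ul; elim: r => [|i r IHr].
  by rewrite big_nil; apply: is_series_ext is_series_0 => j; rewrite big_nil.
rewrite big_cons; apply: is_series_ext (is_series_plus _ _ _ _ (ul i) IHr) => j.
by rewrite big_cons.
Qed.

Lemma is_derive_big (I : Type) (r : seq I) (u : I -> R -> R) (du : I -> R) x :
  (forall i, is_derive (u i) x (du i)) ->
  is_derive (fun t => \sum_(i <- r) u i t)%R x (\sum_(i <- r) du i)%R.
Proof.
move=> udu; elim: r => [|i r IHr].
  by rewrite big_nil; apply: is_derive_ext (is_derive_const 0 x) => t; rewrite big_nil.
rewrite big_cons; apply: is_derive_ext (is_derive_plus _ _ _ _ _ (udu i) IHr) => t.
by rewrite big_cons.
Qed.

Lemma pseries_coef_eq0 (a : nat -> R) :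
  (forall x, is_series (fun k => a k * x ^ k) 0) -> forall k, a k = 0.
Proof.
have radius_gt0 (b : nat -> R) : is_series (fun k => b k * 1 ^ k) 0 -> Rbar_lt 0 (CV_radius b).
  move=> b1; case: (Rbar_lt_le_dec 0 (CV_radius b)) => // radius_le0.
  exfalso; apply: (CV_disk_outside b 1).
    by apply: Rbar_le_lt_trans radius_le0 _; rewrite /= Rabs_R1; apply: Rlt_0_1.
  by apply: ex_series_lim_0; exists 0.
have zero_series x : is_series (fun k => (fun _ : nat => 0) k * x ^ k) 0.
  by apply: is_series_ext is_series_0 => j; rewrite Rmult_0_l.
move=> a0 k; apply: (PSeries_ext_recip a (fun _ => 0) k (radius_gt0 _ (a0 1))).
  exact: radius_gt0.
apply: filter_forall => x.
rewrite (is_pseries_unique a x 0); last exact/is_pseries_R.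
by rewrite (is_pseries_unique (fun _ => 0) x 0) //; apply/is_pseries_R.
Qed.

Lemma is_derive_0_const (g : R -> R) : (forall t, is_derive g t 0) -> forall s t, g s = g t.
Proof.
move=> g'0 s t; have g_cont x : continuity_pt g x.
  by apply/continuity_pt_filterlim/ex_derive_continuous; exists 0.
have [_ [_ ]] := MVT_gen g s t (fun _ => 0) (fun x _ => g'0 x) (fun x _ => g_cont x).
by rewrite Rmult_0_l => /Rminus_diag_uniq_sym.
Qed.

Lemma partials_0_const (f : R -> R -> R) :
  (forall x y, is_derive (fun t => f t y) x 0) -> (forall x y, is_derive (fun t => f x t) y 0) ->
  forall x y, f x y = f 0 0.
Proof.
move=> fx0 fy0 x y; rewrite (is_derive_0_const (fx0^~ y) x 0).
exact: (is_derive_0_const (fy0 0)).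
Qed.

Lemma is_series_ext_unique (a b : nat -> R) la lb :
  (forall j, a j = b j) -> is_series a la -> is_series b lb -> la = lb.
Proof.
move=> ab ala blb; rewrite -(is_series_unique _ _ ala) -(is_series_unique _ _ blb).
exact: Series_ext.
Qed.

Lemma fsumC_fst n f : fst (fsumC n f) = fsumR n (fun i => fst (f i)).
Proof.
have csum_fst m g : fst (csum m g) = rsum m (fun i => fst (g i)) by elim: m => //= m ->.
rewrite /fsumC /fsumR csum_fst; congr rsum; apply: functional_extensionality => i.
by case: Compare_dec.lt_dec.
Qed.

Lemma fsumC_snd n f : snd (fsumC n f) = fsumR n (fun i => snd (f i)).
Proof.
have csum_snd m g : snd (csum m g) = rsum m (fun i => snd (g i)) by elim: m => //= m ->.
rewrite /fsumC /fsumR csum_snd; congr rsum; apply: functional_extensionality => i.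
by case: Compare_dec.lt_dec.
Qed.

Definition coef_re n (c : nat -> idx n -> C) j : 'rV[R]_n := \row_i fst (c j (idx_of_ord i)).
Definition coef_im n (c : nat -> idx n -> C) j : 'rV[R]_n := \row_i snd (c j (idx_of_ord i)).
Definition dz_re n (h : idx n -> R -> R -> R) x y : 'rV[R]_n :=
  \row_i fst (dz (h (idx_of_ord i)) x y).
Definition dz_im n (h : idx n -> R -> R -> R) x y : 'rV[R]_n :=
  \row_i snd (dz (h (idx_of_ord i)) x y).

Lemma gC_cortho n (c : nat -> idx n -> C) m k :
  gC n (c m) (c k) = RtoC 0 <-> cortho (coef_re c m) (coef_im c m) (coef_re c k) (coef_im c k).
Proof.
have gC_re :
    fst (gC n (c m) (c k)) = cdot_re (coef_re c m) (coef_im c m) (coef_re c k) (coef_im c k).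
  rewrite /gC fsumC_fst fsumR_big /cdot_re /dotmx !mxE -sumrB.
  by apply: eq_bigr => i _; rewrite !mxE.
have gC_im :
    snd (gC n (c m) (c k)) = cdot_im (coef_re c m) (coef_im c m) (coef_re c k) (coef_im c k).
  rewrite /gC fsumC_snd fsumR_big /cdot_im /dotmx !mxE -big_split.
  by apply: eq_bigr => i _; rewrite !mxE /= -!RmultE -RplusE Rplus_comm.
rewrite /cortho -gC_re -gC_im; split=> [-> // | [re0 im0]].
by apply: injective_projections; rewrite ?re0 ?im0.
Qed.

Lemma row_of_vec_pdx n (h : idx n -> R -> R -> R) x y :
  row_of_vec (fun i => pdx (h i) x y) = (2 *: dz_re h x y)%R.
Proof. by apply/matrixP => z l; rewrite !mxE /= RdivE ?RoppE IZRposE INRE /=; field. Qed.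

Lemma row_of_vec_pdy n (h : idx n -> R -> R -> R) x y :
  row_of_vec (fun i => pdy (h i) x y) = ((-2) *: dz_im h x y)%R.
Proof. by apply/matrixP => z l; rewrite !mxE /= RdivE ?RoppE IZRposE INRE /=; field. Qed.

Lemma is_derive_row_mul n p (f : idx n -> R -> R) (df : vec n) (W : 'M[R]_(n, p)) l x :
  (forall i, is_derive (f i) x (df i)) ->
  is_derive (fun t => (row_of_vec (fun i => f i t) *m W)%R 0%R l) x
            ((row_of_vec df *m W)%R 0%R l).
Proof.
move=> fdf; rewrite mxE; apply: is_derive_ext (is_derive_big (index_enum 'I_n) _) => [t | i].
  by rewrite mxE; apply: eq_bigr => i _; rewrite mxE.
by rewrite mxE; apply: (@is_derive_scal_l R_AbsRing R_NormedModule).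
Qed.

Lemma derive_sub_mx n m (E : 'M[R]_(m, n)) (f : idx n -> R -> R) (b : vec n) x :
  (forall i, ex_derive (f i) x) -> (forall t, (row_of_vec (fun i => f i t - b i) <= E)%MS) ->
  (row_of_vec (fun i => Derive (f i) x) <= E)%MS.
Proof.
move=> f_der fE; rewrite submxE; apply/eqP/matrixP => z l; rewrite [z]ord1 [RHS]mxE.
have f_b_der i : is_derive (fun t => f i t - b i) x (Derive (f i) x).
  have := is_derive_minus _ _ x _ _ (Derive_correct _ _ (f_der i)) (is_derive_const (b i) x).
  by rewrite /minus opp_zero plus_zero_r.
rewrite -(is_derive_unique _ _ _ (is_derive_row_mul (cokermx E) l f_b_der)).
apply: etrans (Derive_const 0 x); apply: Derive_ext => t.
by have := fE t; rewrite submxE => /eqP ->; rewrite mxE.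
Qed.

Lemma affine_sub_of_dz_sub n (h : idx n -> R -> R -> R) m (E : 'M[R]_(m, n)) :
  (forall i, smooth2 (h i)) ->
  (forall x y, (dz_re h x y <= E)%MS /\ (dz_im h x y <= E)%MS) ->
  forall x y, (row_of_vec (fun i => h i x y - h i 0 0) <= E)%MS.
Proof.
move=> h_smooth dzE x y; rewrite submxE; apply/eqP/matrixP => z l; rewrite [z]ord1 [RHS]mxE.
set phi := fun x y => (row_of_vec (fun i => h i x y) *m cokermx E)%R 0%R l.
have dz_coker x' y' : (dz_re h x' y' *m cokermx E = 0)%R /\ (dz_im h x' y' *m cokermx E = 0)%R.
  by have [] := dzE x' y'; rewrite !submxE => /eqP -> /eqP ->.
have phi_x x' y' : is_derive (fun t => phi t y') x' 0.
  have := is_derive_row_mul (cokermx E) l (fun i => Derive_correct _ _ (h_smooth i nil x' y').1).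
  by rewrite -/(pdx _ _ _) row_of_vec_pdx -scalemxAl (dz_coker x' y').1 scaler0 mxE.
have phi_y x' y' : is_derive (fun t => phi x' t) y' 0.
  have := is_derive_row_mul (cokermx E) l (fun i => Derive_correct _ _ (h_smooth i nil x' y').2.1).
  by rewrite -/(pdy _ _ _) row_of_vec_pdy -scalemxAl (dz_coker x' y').2 scaler0 mxE.
have -> : (row_of_vec (fun i => h i x y - h i 0 0) *m cokermx E)%R 0%R l = phi x y - phi 0 0.
  by rewrite /phi !mxE RminusE -sumrB; apply: eq_bigr => i _; rewrite !mxE mulrBl.
by rewrite (partials_0_const phi_x phi_y x y) Rminus_diag.
Qed.

Unset Implicit Arguments.

Section DzExpansion.
Variables (n : nat) (h : idx n -> R -> R -> R) (c : nat -> idx n -> C).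
Hypothesis dz_series : forall (i : idx n) (x y : R),
  @is_series C_AbsRing C_NormedModule (fun j => Cmult (c j i) (Cpow (x, y) j)) (dz (h i) x y).

Lemma dz_re_series x y {p} (W : 'M[R]_(n, p)) l :
  is_series (fun j => fst (Cpow (x, y) j) * (coef_re c j *m W)%R 0%R l
                    - snd (Cpow (x, y) j) * (coef_im c j *m W)%R 0%R l)
            ((dz_re h x y *m W)%R 0%R l).
Proof.
rewrite mxE; under eq_bigr => i _ do rewrite mxE.
apply: is_series_ext (is_series_big (r := index_enum 'I_n) (fun i =>
  is_series_scal_r (W i l) _ _ (is_series_fst (@dz_series (idx_of_ord i) x y)))) => j.
rewrite !mxE RminusE !RmultE !mulr_sumr -sumrB.
by apply: eq_bigr => i _; rewrite !mxE /= ?RealsE; ring.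
Qed.

Lemma dz_im_series x y {p} (W : 'M[R]_(n, p)) l :
  is_series (fun j => fst (Cpow (x, y) j) * (coef_im c j *m W)%R 0%R l
                    + snd (Cpow (x, y) j) * (coef_re c j *m W)%R 0%R l)
            ((dz_im h x y *m W)%R 0%R l).
Proof.
rewrite mxE; under eq_bigr => i _ do rewrite mxE.
apply: is_series_ext (is_series_big (r := index_enum 'I_n) (fun i =>
  is_series_scal_r (W i l) _ _ (is_series_snd (@dz_series (idx_of_ord i) x y)))) => j.
rewrite !mxE RplusE !RmultE !mulr_sumr -big_split.
by apply: eq_bigr => i _; rewrite !mxE /= ?RealsE; ring.
Qed.

Lemma Cpow_real x j : Cpow (x, 0) j = (x ^ j, 0).
Proof. by elim: j => //= j ->; rewrite /Cmult /= !Rmult_0_r ?Rmult_0_l Rminus_0_r Rplus_0_r. Qed.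

Lemma coef_cortho p q : (forall x, cortho (dz_re h x 0) (dz_im h x 0) p q) ->
  forall j, cortho (coef_re c j) (coef_im c j) p q.
Proof.
move=> dz_pq j; split.
  apply: (pseries_coef_eq0 (a := fun j => cdot_re (coef_re c j) (coef_im c j) p q)) => x.
  have := is_series_minus _ _ _ _ (dz_re_series x 0 p^T%R 0%R) (dz_im_series x 0 q^T%R 0%R).
  rewrite -[plus _ _]/(cdot_re (dz_re h x 0) (dz_im h x 0) p q) (dz_pq x).1.
  apply: is_series_ext => k.
  by rewrite Cpow_real /cdot_re /dotmx /plus /Hierarchy.opp /= ?RealsE; ring.
apply: (pseries_coef_eq0 (a := fun j => cdot_im (coef_re c j) (coef_im c j) p q)) => x.
have := is_series_plus _ _ _ _ (dz_re_series x 0 q^T%R 0%R) (dz_im_series x 0 p^T%R 0%R).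
rewrite -[plus _ _]/(cdot_im (dz_re h x 0) (dz_im h x 0) p q) (dz_pq x).2.
apply: is_series_ext => k.
by rewrite Cpow_real /cdot_im /dotmx /plus /= ?RealsE; ring.
Qed.

Lemma dz_cortho_coef :
  (forall x y x' y', cortho (dz_re h x y) (dz_im h x y) (dz_re h x' y') (dz_im h x' y')) ->
  forall m k, cortho (coef_re c m) (coef_im c m) (coef_re c k) (coef_im c k).
Proof.
move=> dz_dz m k; apply: cortho_sym; apply: coef_cortho => x.
by apply: cortho_sym; apply: coef_cortho => x'; apply: dz_dz.
Qed.

Lemma dz_sub m (E : 'M[R]_(m, n)) :
  (forall j, (coef_re c j <= E)%MS /\ (coef_im c j <= E)%MS) ->
  forall x y, (dz_re h x y <= E)%MS /\ (dz_im h x y <= E)%MS.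
Proof.
move=> cE x y; rewrite !submxE.
have coker0 l j :
    (coef_re c j *m cokermx E)%R 0%R l = 0 /\ (coef_im c j *m cokermx E)%R 0%R l = 0.
  by have [] := cE j; rewrite !submxE => /eqP -> /eqP ->; rewrite !mxE.
split; apply/eqP/matrixP => z l; rewrite [z]ord1 [RHS]mxE.
  apply: is_series_ext_unique (dz_re_series x y _ l) is_series_0 => j.
  by rewrite (coker0 l j).1 (coker0 l j).2 !Rmult_0_r Rminus_0_r.
apply: is_series_ext_unique (dz_im_series x y _ l) is_series_0 => j.
by rewrite (coker0 l j).1 (coker0 l j).2 !Rmult_0_r Rplus_0_r.
Qed.

Lemma dz_cplx (X : 'M[R]_n) :
  (forall j, (coef_re c j *m X = - coef_im c j)%R /\ (coef_im c j *m X = coef_re c j)%R) ->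
  forall x y, (dz_re h x y *m X = - dz_im h x y)%R /\ (dz_im h x y *m X = dz_re h x y)%R.
Proof.
move=> cX x y; split; apply/matrixP => z l; rewrite [z]ord1.
  rewrite [RHS]mxE -[dz_im h x y]mulmx1.
  apply: is_series_ext_unique (dz_re_series x y X l)
    (is_series_opp _ _ (dz_im_series x y _ l)) => j.
  by rewrite (cX j).1 (cX j).2 !mulmx1 !mxE /Hierarchy.opp /= ?RealsE; ring.
rewrite -[in RHS](mulmx1 (dz_re h x y)).
apply: is_series_ext_unique (dz_im_series x y X l) (dz_re_series x y _ l) => j.
by rewrite (cX j).1 (cX j).2 !mulmx1 !mxE ?RealsE; ring.
Qed.

End DzExpansion.

Lemma holomorphic_dz_cortho {n : nat} {h : idx n -> R -> R -> R} :
  (forall i, smooth2 (h i)) -> holomorphic_up_to_rigid_motion n h ->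
  forall x y x' y', cortho (dz_re h x y) (dz_im h x y) (dz_re h x' y') (dz_im h x' y').
Proof.
move=> h_smooth [b [k [e [J]]]] /= [_ [hW [JW [_ [_ [J_iso Jh]]]]]].
have hxW x y : in_span n (2 * k) e (fun i => pdx (h i) x y).
  apply/in_spanP; apply: (derive_sub_mx (b := b)) => [i | t]; first exact: (h_smooth i nil x y).1.
  exact/in_spanP/hW.
have hyW x y : in_span n (2 * k) e (fun i => pdy (h i) x y).
  by rewrite -(Jh x y).1; apply: JW.
have J_dotmx u v : in_span n (2 * k) e u -> in_span n (2 * k) e v ->
    dotmx (row_of_vec (J u)) (row_of_vec (J v)) = dotmx (row_of_vec u) (row_of_vec v).
  by move=> uW vW; rewrite -!dotR_dotmx J_iso.
move=> x y x' y'; have := J_dotmx _ _ (hxW x y) (hxW x' y').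
have := J_dotmx _ _ (hyW x y) (hxW x' y').
rewrite (Jh x y).1 (Jh x y).2 (Jh x' y').1 row_of_vecN !row_of_vec_pdx !row_of_vec_pdy.
rewrite dotmxNl !(dotmxZl, dotmxZr) /cortho /cdot_re /cdot_im => dot_yx dot_xx.
by split; lra.
Qed.

Lemma isotropic_holomorphic {n : nat} {h : idx n -> R -> R -> R} {c : nat -> idx n -> C} :
  (forall (i : idx n) (x y : R),
      @is_series C_AbsRing C_NormedModule
        (fun j => Cmult (c j i) (Cpow (x, y) j)) (dz (h i) x y)) ->
  (forall i, smooth2 (h i)) -> isotropic (coef_re c) (coef_im c) ->
  holomorphic_up_to_rigid_motion n h.
Proof.
move=> dz_series h_smooth iso_c.
have [r [E [X [freeE even_r cE cX [XE XX Xiso]]]]] := isotropic_cplx_structure iso_c.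
have [e spanE] := exists_span_mx E.
have dzX := dz_cplx n h c dz_series X cX.
have r_even : Nat.mul 2 r./2 = r by rewrite -mulnE mul2n -[RHS]odd_double_half (negbTE even_r).
exists (fun i => h i 0 0), r./2, e, (fun v => vec_of_row (row_of_vec v *m X)%R).
rewrite r_even /=; split; last split; last split; last split; last split; last split.
- by apply: lin_indep_row_free; rewrite spanE.
- move=> x y; apply/in_spanP; rewrite spanE.
  by apply: affine_sub_of_dz_sub => //; apply: dz_sub.
- by move=> u /in_spanP; rewrite spanE => uE; apply/in_spanP; rewrite spanE vec_of_rowK XE.
- move=> u v a _ _; apply: row_of_vec_inj.
  by rewrite vec_of_rowK !row_of_vec_lin !vec_of_rowK mulmxDl scalemxAl.
- move=> u /in_spanP; rewrite spanE => uE; apply: row_of_vec_inj.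
  by rewrite !vec_of_rowK row_of_vecN XX.
- move=> u v /in_spanP uE /in_spanP vE; rewrite spanE in uE vE.
  by rewrite !dotR_dotmx !vec_of_rowK Xiso.
move=> x y; split; apply: row_of_vec_inj; rewrite vec_of_rowK ?row_of_vecN.
  by rewrite row_of_vec_pdx row_of_vec_pdy -scalemxAl (dzX x y).1 scalerN -scaleNr.
by rewrite row_of_vec_pdx row_of_vec_pdy -scalemxAl (dzX x y).2 scaleNr.
Qed.

Theorem theorem2p1 (n : nat) (h : idx n -> R -> R -> R) (c : nat -> idx n -> C) :
  branched_minimal_immersion n h ->
  (forall (i : idx n) (x y : R),
      @is_series C_AbsRing C_NormedModule
        (fun j => Cmult (c j i) (Cpow (x, y) j)) (dz (h i) x y)) ->
  (holomorphic_up_to_rigid_motion n h <->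
   forall m k : nat, gC n (c m) (c k) = RtoC 0).
Proof.
move=> [_ [h_smooth _]] dz_series; split=> [hol m k | gC0].
  apply/gC_cortho/(dz_cortho_coef n h c dz_series).
  exact: holomorphic_dz_cortho h_smooth hol.
apply: (isotropic_holomorphic dz_series h_smooth); apply/isotropicP => m k.
exact/gC_cortho/gC0.
Qed.
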